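(* Let $g,h$ be distinct formal letters (with $g\not\equiv h$, i.e. $h\ne g,g^{-1}$). For all $n\ge1$, the iterated commutator word $[g,h]_n$ contains none of the square words in $g$ and $h$ as a cyclic subword.
   Context: Iterated commutator words in the free group on $g,h$: $[g,h]_1:=gh^{-1}g^{-1}h$, and for $n\ge 2$, $[g,h]_n$ is the reduced form of $g\,[g,h]_{n-1}^{-1}\,g^{-1}\,[g,h]_{n-1}$. A cyclic permutation of a word $a_1\cdots a_n$ is a word $a_k\cdots a_na_1\cdots a_{k-1}$ for some $k\in[n]$. A word $u$ is a cyclic subword of $w$ if $u$ or $u^{-1}$ is a contiguous subword of some cyclic permutation of $w$. The square words in $g$ and $h$ are the words obtained from $ghgh$ and $gh^{-1}gh^{-1}$ by cyclic permutations and inversions, namely $ghgh$, $hghg$, $h^{-1}g^{-1}h^{-1}g^{-1}$, $g^{-1}h^{-1}g^{-1}h^{-1}$, $gh^{-1}gh^{-1}$, $h^{-1}gh^{-1}g$, $hg^{-1}hg^{-1}$, $g^{-1}hg^{-1}h$. *)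

From mathcomp Require Import all_boot.
Set Implicit Arguments. Unset Strict Implicit. Unset Printing Implicit Defensive.

(* A letter is (is_h, inverted): g = (false,false), g^-1 = (false,true),
   h = (true,false), h^-1 = (true,true).  Since g and h are distinct
   generators of a free group, h is neither g nor g^-1. *)
Definition letter := (bool * bool)%type.
Definition lg : letter := (false, false).
Definition lgi : letter := (false, true).
Definition lh : letter := (true, false).
Definition lhi : letter := (true, true).

Definition linv (x : letter) : letter := (x.1, ~~ x.2).

Definition winv (w : seq letter) : seq letter := rev (map linv w).

Definition push (x : letter) (s : seq letter) : seq letter :=
  match s with
  | y :: s' => if y == linv x then s' else x :: s
  | [::] => [:: x]
  end.

Definition reduce (w : seq letter) : seq letter := foldr push [::] w.

(* [g,h]_1 = g h^-1 g^-1 h ;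
   [g,h]_n = reduced form of g [g,h]_{n-1}^-1 g^-1 [g,h]_{n-1}  (n >= 2).
   comm 0 is an unused dummy value. *)
Fixpoint comm (n : nat) : seq letter :=
  match n with
  | 0 => [::]
  | S m => if m is 0 then [:: lg; lhi; lgi; lh]
           else reduce (lg :: winv (comm m) ++ lgi :: comm m)
  end.

(* Cyclic permutations of a_1...a_n: a_k...a_n a_1...a_{k-1}, k in [n],
   i.e. rot k w for k < size w.  u is a cyclic subword of w if u or u^-1 is
   a contiguous subword of some cyclic permutation of w. *)
Definition cyclic_subword (u w : seq letter) : Prop :=
  exists2 k, k < size w &
    (infix u (rot k w) \/ infix (winv u) (rot k w)).

Definition square_words : seq (seq letter) :=
  [:: [:: lg; lh; lg; lh];
      [:: lh; lg; lh; lg];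
      [:: lhi; lgi; lhi; lgi];
      [:: lgi; lhi; lgi; lhi];
      [:: lg; lhi; lg; lhi];
      [:: lhi; lg; lhi; lg];
      [:: lh; lgi; lh; lgi];
      [:: lgi; lh; lgi; lh]].

From mathcomp Require Import all_boot.
From mathcomp Require Import zify.

Set Implicit Arguments.
Unset Strict Implicit.
Unset Printing Implicit Defensive.

(** By induction, [[g,h]_n] starts with [g], has length divisible by 4
    and follows the pattern [g^± h^-1 g^± h g^± h^-1 g^± h ...]: since
    [c] starts with [g], the word [g c^-1 g^-1 c] reduces to
    [g c^-1 c'] where [c = g c'], and this word already follows the pattern,
    so no further cancellation occurs.  As the length is divisible by 4, the
    pattern survives cyclic permutations up to a shift of the positions, and
    inverting a subword reflects it.  But in a square word the two [h]-letters
    at distance 2 are equal, whereas in the pattern they are mutually inverse. *)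

Definition pattern_letter (i : nat) (x : letter) : bool :=
  match i %% 4 with
  | 1 => x == lhi
  | 3 => x == lh
  | _ => ~~ x.1
  end.

Fixpoint patterned (o : nat) (w : seq letter) : bool :=
  if w is x :: w' then pattern_letter o x && patterned o.+1 w' else true.

Definition freely_reduced (w : seq letter) : bool :=
  sorted (fun x y => y != linv x) w.

Definition is_square (u : seq letter) : bool :=
  if u is [:: a; b; c; d] then (a == c) && (b == d) else false.

Lemma linvK : involutive linv.
Proof. by case=> ? []. Qed.

Lemma size_winv w : size (winv w) = size w.
Proof. by rewrite size_rev size_map. Qed.

Lemma pattern_letter_eqmod i j : i = j %[mod 4] -> pattern_letter i = pattern_letter j.
Proof. by rewrite /pattern_letter => ->. Qed.

Lemma pattern_letter_linv i j x : i + j = 0 %[mod 4] ->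
  pattern_letter i (linv x) = pattern_letter j x.
Proof.
rewrite -(pattern_letter_eqmod (modn_mod i 4)) -(pattern_letter_eqmod (modn_mod j 4)).
rewrite -modnDm.
have [] := (ltn_pmod i (isT : 0 < 4), ltn_pmod j (isT : 0 < 4)).
case: (i %% 4) => [|[|[|[|?]]]] //; case: (j %% 4) => [|[|[|[|?]]]] //= _ _ ij;
  by case: x => [[] []].
Qed.

Lemma pattern_letter_kind i x : pattern_letter i x -> x.1 = odd i.
Proof.
rewrite /pattern_letter -(@odd_mod i 4) //.
have := ltn_pmod i (isT : 0 < 4).
case: (i %% 4) => [|[|[|[|?]]]] // _.
all: by case: x => [[] ?].
Qed.

Lemma patterned_eqmod o p w : o = p %[mod 4] -> patterned o w = patterned p w.
Proof.
elim: w o p => [|x w IH] o p //= eop.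
by rewrite (pattern_letter_eqmod eop) (IH o.+1 p.+1) //; lia.
Qed.

Lemma patterned_cons o x w :
  patterned o (x :: w) = pattern_letter o x && patterned o.+1 w.
Proof. by []. Qed.

Lemma patterned_cat o s t :
  patterned o (s ++ t) = patterned o s && patterned (o + size s) t.
Proof. by elim: s o => [|x s IH] o /=; rewrite ?addn0 // IH addnS andbA. Qed.

Lemma patterned_winv o p w : o + p + size w = 1 %[mod 4] ->
  patterned o (winv w) = patterned p w.
Proof.
elim: w p => [|x w IH] p //= opw.
rewrite /winv map_cons rev_cons -cats1 patterned_cat -/(winv w) /= andbT.
rewrite size_winv (IH p.+1) 1?andbC; last by lia.
by congr andb; apply: pattern_letter_linv; lia.
Qed.

Lemma patterned_rot o k w : 4 %| size w -> k <= size w ->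
  patterned o w -> patterned (o + k) (rot k w).
Proof.
move=> w4 kw; rewrite -{1}(cat_take_drop k w) /rot !patterned_cat size_drop.
rewrite size_takel // => /andP[pt pd]; rewrite pd (patterned_eqmod (p := o)) //.
lia.
Qed.

Lemma patterned_infix o u w : patterned o w -> infix u w -> exists p, patterned p u.
Proof.
move=> pw /infixP[s [t def_w]]; move: pw; rewrite def_w !patterned_cat.
by case/and3P=> _ pu _; exists (o + size s).
Qed.

Lemma square_not_patterned o u : is_square u -> ~~ patterned o u.
Proof.
move=> sq; rewrite -(patterned_eqmod u (modn_mod o 4)).
have := ltn_pmod o (isT : 0 < 4); case: (o %% 4) => [|[|[|[|?]]]] // _;
  move: sq; case: u => [|a [|b [|c [|d [|? ?]]]]] //= /andP[/eqP<- /eqP<-];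
  by case: a => [[] []]; case: b => [[] []].
Qed.

Lemma is_square_winv u : is_square u -> is_square (winv u).
Proof.
by case: u => [|a [|b [|c [|d [|? ?]]]]] //= /andP[/eqP-> /eqP->]; rewrite /winv /= !eqxx.
Qed.

Lemma patterned_freely_reduced o w : patterned o w -> freely_reduced w.
Proof.
elim: w o => [|x [|y w] IH] o //= /andP[px pyw].
move: (IH _ pyw) => /= ->; have [py _] := andP pyw; rewrite andbT.
apply/eqP => yx; move: (pattern_letter_kind py) (pattern_letter_kind px).
by rewrite yx /= => ->; case: (odd o).
Qed.

Lemma reduce_cons x w : reduce (x :: w) = push x (reduce w).
Proof. by []. Qed.

Lemma reduce_freely_reduced w : freely_reduced w -> reduce w = w.
Proof.
elim: w => [|x w IH] // rxw; rewrite reduce_cons IH; last exact: path_sorted rxw.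
by case: w rxw {IH} => //= y w /andP[/negbTE-> _].
Qed.

Lemma reduce_cancel s x t : freely_reduced (x :: t) ->
  reduce (s ++ linv x :: x :: t) = reduce (s ++ t).
Proof.
move=> rxt; rewrite /reduce !foldr_cat; congr (foldr _ _ _).
rewrite -/(reduce t) (reduce_freely_reduced (path_sorted rxt)).
by rewrite -[foldr _ _ _]/(push (linv x) (reduce (x :: t))) reduce_freely_reduced //= linvK eqxx.
Qed.

Definition comm_shaped (c : seq letter) : Prop :=
  [/\ exists c', c = lg :: c', 4 %| size c & patterned 0 c].

Lemma comm_step c : comm_shaped c -> comm_shaped (reduce (lg :: winv c ++ lgi :: c)).
Proof.
case=> [[c' ->{c}] c4 pc].
have pw : patterned 0 (lg :: winv (lg :: c') ++ c').
  rewrite patterned_cons patterned_cat; apply/and3P; split => //.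
    by rewrite (patterned_winv (p := 0)) //; lia.
  by rewrite (patterned_eqmod (p := 1)) ?size_winv //; lia.
rewrite -[lgi]/(linv lg) -cat_cons reduce_cancel ?(patterned_freely_reduced pc) //.
rewrite reduce_freely_reduced ?(patterned_freely_reduced pw) //; split => //.
  by exists (winv (lg :: c') ++ c').
by move: c4; rewrite /= size_cat size_winv /=; lia.
Qed.

Lemma comm_shaped_comm n : 1 <= n -> comm_shaped (comm n).
Proof.
case: n => // n _; elim: n => [|n IH]; first by split => //; exists [:: lhi; lgi; lh].
exact: comm_step.
Qed.

Theorem lemma3p11 (n : nat) : 1 <= n ->
  forall u : seq letter, u \in square_words -> ~ cyclic_subword u (comm n).
Proof.
move=> n1 u su [k kc cu].
have [_ c4 pc] := comm_shaped_comm n1.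
have pk := patterned_rot c4 (ltnW kc) pc.
have squ : is_square u := allP (isT : all is_square square_words) u su.
case: cu => /(patterned_infix pk) [p]; apply/negP.
  exact: square_not_patterned.
exact/square_not_patterned/is_square_winv.
Qed.
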